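(* Let $X=\{x_1,\dots,x_n\}$ be a finite set of alternatives, let $k\ge 1$ be an integer, let $\mathcal{B}=\{B_1,\dots,B_m\}$ be a collection of non-empty subsets of $X$ and let $\bm{c}$ be a choice function on $\mathcal{B}$ (i.e. $\bm{c}(B_i)\in B_i$). Write $b_i=|B_i|$. Then $(\mathcal{B},\bm{c})$ is rationalizable with $k^{th}$-order choice under limited attention if and only if there exist real numbers $u_1,\dots,u_n>0$ (one for each alternative), binary numbers $\delta_{ij}\in\{0,1\}$ ($i=1,\dots,m$, $j=1,\dots,n$), and a constant $M>0$ (the ''big-$M$'', taken arbitrarily large, so that a constraint with a term $(1-\delta_{ij})M$ is void when $\delta_{ij}=0$) such that: (1) for every $i$ and every $x_j\in B_i$ with $x_j\neq \bm{c}(B_i)$, writing $\bm{c}(B_i)=x_l$: $u_l> u_j-(1-\delta_{ij})M$; (2) $\delta_{ij}=0$ whenever $x_j\notin B_i$; (3) for all $i,j$ with $\bm{c}(B_i)\ne\bm{c}(B_j)$ and $\bm{c}(B_i),\bm{c}(B_j)\in B_i\cap B_j$: $\sum_{x_l\in B_i\setminus B_j}\delta_{il}+\sum_{x_l\in B_j\setminus B_i}\delta_{jl}\ge 1$; (4) for every $i$: $\sum_{x_j\in B_i}\delta_{ij}\ge\min\{k,b_i\}$.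
   Context: A strict preference relation on $X$ is a complete, transitive and asymmetric binary relation $\succ$. An attention filter is a map $\Gamma$ from non-empty subsets of $X$ to subsets of $X$ such that $\Gamma(B)\subseteq B$ for every $B$, and $\Gamma(B)=\Gamma(B\setminus\{x\})$ for every $B$ and every $x\in B\setminus\Gamma(B)$. A data set $(\mathcal{B},\bm{c})$ is rationalizable with $k^{th}$-order choice under limited attention if there exist a strict preference relation $\succ$ and an attention filter $\Gamma$ with $|\Gamma(B)|\ge\min\{|B|,k\}$ for all non-empty $B\subseteq X$, such that for every $B\in\mathcal{B}$, $\bm{c}(B)$ is the $\succ$-maximal element of $\Gamma(B)$. (Intended interpretation: $\delta_{ij}=1$ iff $x_j\in\Gamma(B_i)$, and $u_j$ is a utility of $x_j$.) *)

From mathcomp Require Import all_boot all_order all_algebra.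
Set Implicit Arguments. Unset Strict Implicit. Unset Printing Implicit Defensive.
Import Order.TTheory GRing.Theory Num.Theory.

Section Defs.
Variable T : finType.

Definition strict_pref (P : rel T) : Prop :=
  [/\ (forall x y, x != y -> P x y \/ P y x),
      (forall x y z, P x y -> P y z -> P x z) &
      (forall x y, P x y -> ~~ P y x)].

Definition attention_filter (G : {set T} -> {set T}) : Prop :=
  (forall B, G B \subset B) /\
  (forall (B : {set T}) (x : T), x \in B -> x \notin G B -> G B = G (B :\ x)).

Definition is_max (P : rel T) (A : {set T}) (x : T) : Prop :=
  x \in A /\ (forall y, y \in A -> y != x -> P x y).

Definition rationalizable_k (k : nat) (Bs : {set {set T}}) (c : {set T} -> T)
  : Prop :=
  exists (P : rel T) (G : {set T} -> {set T}),
    [/\ strict_pref P, attention_filter G,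
        (forall B, B != set0 -> minn #|B| k <= #|G B|) &
        (forall B, B \in Bs -> is_max P (G B) (c B))].
End Defs.

From mathcomp Require Import all_boot all_order all_algebra.
Import Order.TTheory GRing.Theory Num.Theory.
Set Implicit Arguments. Unset Strict Implicit. Unset Printing Implicit Defensive.

(* Both sides are equivalent to a strict preference P together with, for
   every menu B, a consideration set D B ⊆ B of size at least min k |B| whose
   P-maximum is c B, such that two menus containing each other's
   consideration sets choose alike.  From an attention filter take D B := G B:
   discarding unattended items does not change G, so two such menus share the
   attention set of B ∩ B'.  Conversely, a set S attends to the items not
   preferred to c B for any menu B with D B ⊆ S ⊆ B, and to all of S if there
   is no such menu.  In the integer program delta encodes D and u represents
   P: take u to be the P-rank, and conversely recover P by breaking the ties
   of u. *)

Lemma sum_nat_bool_card (T : finType) (A : {set T}) (b : pred T) :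
  \sum_(x in A) b x = #|[set x in A | b x]|.
Proof. by rewrite -sum1dep_card big_mkcondr. Qed.

Lemma sum_mem_card (T : finType) (A C : {set T}) :
  \sum_(x in A) (x \in C) = #|A :&: C|.
Proof. by rewrite sum_nat_bool_card; apply: eq_card => x; rewrite !inE. Qed.

Section StrictPreference.
Variables (T : finType) (P : rel T).
Hypothesis P_strict : strict_pref P.

Lemma strict_pref_irr x : ~~ P x x.
Proof.
by apply/negP => Pxx; have [_ _ /(_ x x Pxx)] := P_strict; rewrite Pxx.
Qed.

Lemma is_max_npref A x y : is_max P A x -> y \in A -> ~~ P y x.
Proof.
case=> _ xmax yA; have [->|yx] := eqVneq y x; first exact: strict_pref_irr.
by have [_ _ Pasym] := P_strict; apply: Pasym; apply: xmax.
Qed.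

Lemma is_max_uniq A x y : is_max P A x -> is_max P A y -> x = y.
Proof.
move=> xmax ymax; apply/eqP; apply: contraT => xy.
have [[xA xbest] [yA _]] := (xmax, ymax).
by have := is_max_npref ymax xA; rewrite xbest // eq_sym.
Qed.

Definition pref_rank x := #|[set y | P x y]|.

Lemma pref_rank_lt x y : P x y -> pref_rank y < pref_rank x.
Proof.
move=> Pxy; have [_ Ptrans _] := P_strict.
apply: proper_card; apply/properP; split.
  by apply/subsetP => z; rewrite !inE; apply: Ptrans.
by exists y; rewrite !inE ?Pxy ?strict_pref_irr.
Qed.

End StrictPreference.

Section LexPreference.
Variables (d : Order.disp_t) (R : orderType d) (T : finType) (u : T -> R).

Definition lex_pref : rel T := fun x y =>
  (u y < u x)%O || ((u y == u x) && (enum_rank y < enum_rank x)%N).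

Lemma lex_pref_lt x y : (u y < u x)%O -> lex_pref x y.
Proof. by rewrite /lex_pref => ->. Qed.

Lemma lex_pref_strict : strict_pref lex_pref.
Proof.
rewrite /lex_pref; split.
- move=> x y xy; case: (ltgtP (u x) (u y)) => _; [by right | by left |].
  rewrite /=; case: ltngtP; [by left | by right |].
  by move/val_inj/enum_rank_inj => yx; rewrite yx eqxx in xy.
- move=> x y z /orP[uyx | /andP[/eqP uyx ryx]] /orP[uzy | /andP[/eqP uzy rzy]].
  + by rewrite (lt_trans uzy uyx).
  + by rewrite uzy uyx.
  + by rewrite -uyx uzy.
  + by rewrite uzy uyx eqxx (ltn_trans rzy ryx) orbT.
- move=> x y /orP[uyx | /andP[/eqP uyx ryx]].
    by rewrite (lt_gtF uyx) (gt_eqF uyx).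
  by rewrite uyx ltxx eqxx /= ltnNge ltnW.
Qed.

End LexPreference.

Lemma attention_filter_restrict (T : finType) (G : {set T} -> {set T})
    (B S : {set T}) :
  attention_filter G -> G B \subset S -> S \subset B -> G S = G B.
Proof.
move=> [_ Gdel]; have [n] := ubnP #|B :\: S|; elim: n B => // n IH B.
rewrite ltnS => sizeBS GBS SB; have [/eqP | [x]] := set_0Vmem (B :\: S).
  by rewrite setD_eq0 => BS; congr G; apply/eqP; rewrite eqEsubset SB.
rewrite inE => /andP[xnS xB].
have GBx : G B = G (B :\ x) by apply: Gdel; rewrite // (contra (subsetP GBS x)).
rewrite GBx; apply: IH; rewrite -?GBx //; last by rewrite subsetD1 SB.
rewrite setDDl setUC -setDDl; move: sizeBS.
by rewrite (cardsD1 x (B :\: S)) inE xnS xB add1n.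
Qed.

Definition revealed_model (T : finType) (k : nat) (Bs : {set {set T}})
    (c : {set T} -> T) (P : rel T) (D : {set T} -> {set T}) : Prop :=
  [/\ strict_pref P,
      forall B, B \in Bs -> D B \subset B,
      forall B, B \in Bs -> is_max P (D B) (c B),
      forall B, B \in Bs -> minn k #|B| <= #|D B| &
      forall B B', B \in Bs -> B' \in Bs ->
        D B \subset B' -> D B' \subset B -> c B = c B'].

Lemma revealed_of_rationalizable (T : finType) (k : nat) (Bs : {set {set T}})
    (c : {set T} -> T) :
  (forall B, B \in Bs -> B != set0) ->
  rationalizable_k k Bs c -> exists P D, revealed_model k Bs c P D.
Proof.
move=> Bne [P [G [Pstrict AF Gsize Gmax]]]; exists P, G.
have GB B : G B \subset B by case: AF.
split=> // [B BBs | B B' BBs B'Bs GBB' GB'B]; first by rewrite minnC Gsize ?Bne.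
have restrictI (B1 B2 : {set T}) : G B1 \subset B2 -> G (B1 :&: B2) = G B1.
  by move=> GB12; apply: attention_filter_restrict; rewrite ?subsetIl ?subsetI ?GB.
apply: (is_max_uniq Pstrict (Gmax B BBs)).
by rewrite -(restrictI B B') // setIC restrictI //; apply: Gmax.
Qed.

Section RevealedFilter.
Variables (T : finType) (k : nat) (Bs : {set {set T}}) (c : {set T} -> T).
Variables (P : rel T) (D : {set T} -> {set T}).
Hypothesis model : revealed_model k Bs c P D.

Definition explains (S B : {set T}) := [&& B \in Bs, D B \subset S & S \subset B].

(* All menus explaining [S] choose the same item, so the pick is irrelevant. *)
Definition revealed_filter (S : {set T}) : {set T} :=
  if [pick B | explains S B] is Some B then [set y in S | ~~ P y (c B)] else S.

Lemma explains_choice (S B B' : {set T}) :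
  explains S B -> explains S B' -> c B = c B'.
Proof.
case: model => _ _ _ _ Dcons /and3P[BBs DBS SB] /and3P[B'Bs DB'S SB'].
by apply: Dcons; rewrite // (subset_trans _ SB', subset_trans _ SB).
Qed.

Lemma revealed_filterE S B :
  explains S B -> revealed_filter S = [set y in S | ~~ P y (c B)].
Proof.
move=> SB; rewrite /revealed_filter; case: pickP => [B' SB' | none].
  by rewrite (explains_choice SB' SB).
by rewrite none in SB.
Qed.

Lemma revealed_filter_id S : explains S =1 xpred0 -> revealed_filter S = S.
Proof.
by rewrite /revealed_filter => none; case: pickP => [B | //]; rewrite none.
Qed.

Lemma revealed_filter_sub S : revealed_filter S \subset S.
Proof.
rewrite /revealed_filter; case: pickP => [B _ | _]; last exact: subxx.
by apply/subsetP => y; rewrite inE => /andP[].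
Qed.

Lemma consideration_sub_filter S B :
  explains S B -> D B \subset revealed_filter S.
Proof.
case: model => Pstrict _ Dmax _ _ SB; rewrite (revealed_filterE SB).
case/and3P: SB => BBs DBS _; apply/subsetP => y yD.
by rewrite inE (subsetP DBS) // (is_max_npref Pstrict (Dmax B BBs)).
Qed.

Lemma revealed_filter_attention : attention_filter revealed_filter.
Proof.
split=> [|S x xS]; first exact: revealed_filter_sub.
have [B SB | /revealed_filter_id ->] := pickP (explains S); last by rewrite xS.
move=> xnF; have xnD : x \notin D B.
  exact: contra (subsetP (consideration_sub_filter SB) x) xnF.
move: xnF; rewrite (revealed_filterE SB) inE xS negbK => Pxc.
have SxB : explains (S :\ x) B.
  case/and3P: SB => BBs DBS SB.
  by rewrite /explains BBs subsetD1 DBS xnD (subset_trans (subD1set S x) SB).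
rewrite (revealed_filterE SxB); apply/setP => y; rewrite !inE.
by case: eqVneq => [-> | _]; rewrite ?Pxc ?andbF.
Qed.

Lemma revealed_filter_size (S : {set T}) : minn #|S| k <= #|revealed_filter S|.
Proof.
have [B SB | /revealed_filter_id ->] := pickP (explains S); last exact: geq_minl.
case: model => _ _ _ Dsize _; have /and3P[BBs _ SB'] := SB.
apply: leq_trans (subset_leq_card (consideration_sub_filter SB)).
apply: leq_trans (Dsize B BBs); rewrite minnC leq_min geq_minl.
by rewrite (leq_trans (geq_minr _ _) (subset_leq_card SB')).
Qed.

Lemma revealed_filter_max B : B \in Bs -> is_max P (revealed_filter B) (c B).
Proof.
case: model => Pstrict DB Dmax _ _ BBs.
have BB : explains B B by rewrite /explains BBs DB ?subxx.
have [cD _] := Dmax B BBs; rewrite (revealed_filterE BB).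
split=> [|y]; first by rewrite inE (subsetP (DB B BBs) _ cD) strict_pref_irr.
rewrite inE => /andP[_ nPyc] yc; have [Ptotal _ _] := Pstrict.
by case: (Ptotal y (c B) yc) => // Pyc; rewrite Pyc in nPyc.
Qed.

Lemma rationalizable_of_revealed : rationalizable_k k Bs c.
Proof.
exists P, revealed_filter; case: model => Pstrict _ _ _ _; split=> //.
- exact: revealed_filter_attention.
- by move=> S _; apply: revealed_filter_size.
- exact: revealed_filter_max.
Qed.

End RevealedFilter.

Local Open Scope ring_scope.

Definition milp_solution (R : realFieldType) (T : finType) (k : nat)
    (Bs : {set {set T}}) (c : {set T} -> T)
    (u : T -> R) (delta : {set T} -> T -> bool) (M : R) : Prop :=
  [/\ (forall x, 0 < u x) /\ 0 < M,
      (forall B x, B \in Bs -> x \in B -> x != c B ->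
         u x - (1 - (delta B x)%:R) * M < u (c B)),
      (forall B x, B \in Bs -> x \notin B -> delta B x = false),
      (forall B B', B \in Bs -> B' \in Bs -> c B != c B' ->
         c B \in B :&: B' -> c B' \in B :&: B' ->
         (1 <= \sum_(x in B :\: B') delta B x
               + \sum_(x in B' :\: B) delta B' x)%N) &
      (forall B, B \in Bs ->
         (minn k #|B| <= \sum_(x in B) delta B x)%N)].

Lemma milp_of_revealed (R : realFieldType) (T : finType) (k : nat)
    (Bs : {set {set T}}) (c : {set T} -> T)
    (P : rel T) (D : {set T} -> {set T}) :
  revealed_model k Bs c P D ->
  exists (u : T -> R) (delta : {set T} -> T -> bool) (M : R),
    milp_solution k Bs c u delta M.
Proof.
move=> [Pstrict DB Dmax Dsize Dcons].
pose u x : R := (pref_rank P x).+1%:R.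
have u_gt0 x : 0 < u x by rewrite ltr0n.
exists u, (fun B x => x \in D B), #|T|.+1%:R; split.
- by split=> //; rewrite ltr0n.
- move=> B x BBs xB xc; have [xD | xnD] /= := boolP (x \in D B).
    rewrite subrr mul0r subr0 ltr_nat ltnS.
    by apply: (pref_rank_lt Pstrict); apply: (Dmax B BBs).2.
  rewrite subr0 mul1r (le_lt_trans _ (u_gt0 (c B))) // subr_le0.
  by rewrite ler_nat ltnS max_card.
- by move=> B x BBs; apply: contraNF; apply: (subsetP (DB B BBs)).
- move=> B B' BBs B'Bs ncc _ _; rewrite !sum_mem_card.
  rewrite !setIDAC (setIidPr (DB B BBs)) (setIidPr (DB B' B'Bs)).
  rewrite lt0n addn_eq0 !cards_eq0 !setD_eq0.
  by apply: contra ncc => /andP[DBB' DB'B]; rewrite (Dcons B B').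
- by move=> B BBs; rewrite sum_mem_card (setIidPr (DB B BBs)) Dsize.
Qed.

Definition consideration_set (T : finType) (c : {set T} -> T)
    (delta : {set T} -> T -> bool) (B : {set T}) : {set T} :=
  c B |: [set x in B | delta B x].

Lemma revealed_of_milp (R : realFieldType) (T : finType) (k : nat)
    (Bs : {set {set T}}) (c : {set T} -> T)
    (u : T -> R) (delta : {set T} -> T -> bool) (M : R) :
  (forall B, B \in Bs -> c B \in B) -> milp_solution k Bs c u delta M ->
  revealed_model k Bs c (lex_pref u) (consideration_set c delta).
Proof.
move=> cB [_ u_lt _ separate attend]; rewrite /consideration_set; split.
- exact: lex_pref_strict.
- by move=> B BBs; rewrite subUset sub1set cB // setIdE subsetIl.
- move=> B BBs; split=> [|y]; first exact: setU11.
  rewrite !inE => /orP[/eqP -> | /andP[yB dy] yc]; first by rewrite eqxx.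
  by apply: lex_pref_lt; have := u_lt B y BBs yB yc; rewrite dy subrr mul0r subr0.
- move=> B BBs; rewrite (leq_trans (attend B BBs)) // sum_nat_bool_card.
  exact/subset_leq_card/subsetUr.
- move=> B B' BBs B'Bs DBB' DB'B; apply/eqP; apply: contraT => ncc.
  have choice_in (B1 B2 : {set T}) : B1 \in Bs ->
      consideration_set c delta B1 \subset B2 -> c B1 \in B1 :&: B2.
    by move=> B1Bs /subsetP sub; rewrite inE cB // sub // setU11.
  have no_delta (B1 B2 : {set T}) : consideration_set c delta B1 \subset B2 ->
      [set x in B1 :\: B2 | delta B1 x] = set0.
    move/subsetP => sub; apply/setP => x; rewrite !inE; apply/negbTE/negP.
    case/andP=> /andP[xnB2 xB1] dx.
    have := sub x; rewrite /consideration_set !inE xB1 dx orbT (negbTE xnB2).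
    by move/(_ isT).
  have := separate B B' BBs B'Bs ncc (choice_in _ _ BBs DBB').
  rewrite setIC choice_in // => /(_ isT).
  by rewrite !sum_nat_bool_card !no_delta // cards0.
Qed.

Theorem theorem2 (R : realFieldType) (T : finType) (k : nat)
  (Bs : {set {set T}}) (c : {set T} -> T) :
  (1 <= k)%N ->
  (forall B, B \in Bs -> B != set0) ->
  (forall B, B \in Bs -> c B \in B) ->
  rationalizable_k k Bs c <->
  exists (u : T -> R) (delta : {set T} -> T -> bool) (M : R),
    [/\ (forall x, 0 < u x) /\ 0 < M,
        (* (1) *)
        (forall B x, B \in Bs -> x \in B -> x != c B ->
           u x - (1 - (delta B x)%:R) * M < u (c B)),
        (* (2) *)
        (forall B x, B \in Bs -> x \notin B -> delta B x = false),
        (* (3) *)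
        (forall B B', B \in Bs -> B' \in Bs -> c B != c B' ->
           c B \in B :&: B' -> c B' \in B :&: B' ->
           (1 <= \sum_(x in B :\: B') delta B x
                 + \sum_(x in B' :\: B) delta B' x)%N) &
        (* (4) *)
        (forall B, B \in Bs ->
           (minn k #|B| <= \sum_(x in B) delta B x)%N)].
Proof.
(* The equivalence holds for every [k], including [k = 0]. *)
move=> _ Bne cB; split.
- by case/(revealed_of_rationalizable Bne) => P [D /(milp_of_revealed R)].
- by case=> u [delta [M /(revealed_of_milp cB)/rationalizable_of_revealed]].
Qed.
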